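(* For $p,q>0$, $x\ge0$ and $0\le y<1$, with $z=\tfrac12xy$, the series below converge and $$B_{p,q}(x,y)=\frac{e^{-x/2}y^p(1-y)^q}{pB(p,q)}\sum_{j=0}^\infty y^j\frac{(p+q)_j}{(p+1)_j}M(p+q+j,p+1+j,z) =\frac{e^{x(y-1)/2}y^p(1-y)^q}{pB(p,q)}\sum_{j=0}^\infty y^j\frac{(p+q)_j}{(p+1)_j}M(1-q,p+1+j,-z).$$ Equivalently, $B_{p,q}(x,y)=\frac{e^{-x/2}y^p(1-y)^q}{pB(p,q)}\sum_{j=0}^\infty y^j\,\frac{d^j}{dz^j}M(p+q,p+1,z)$.
   Context: For $p,q>0$ and $0\le y\le 1$, $I_y(p,q)=\frac{1}{B(p,q)}\int_0^y t^{p-1}(1-t)^{q-1}\,dt$ is the regularized incomplete beta function, with $B(p,q)=\Gamma(p)\Gamma(q)/\Gamma(p+q)$. The cumulative noncentral beta distribution is $B_{p,q}(x,y)=e^{-x/2}\sum_{j=0}^\infty \frac{1}{j!}\left(\frac x2\right)^j I_y(p+j,q)$ for $x\ge0$. $M(a,b,z)=\sum_{n\ge0}\frac{(a)_n}{(b)_n}\frac{z^n}{n!}$ is Kummer's confluent hypergeometric function, and $(a)_n$ is the Pochhammer symbol. *)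

From Stdlib Require Import Reals Lra ClassicalEpsilon Arith Factorial.
Open Scope R_scope.

Definition improper_int (f : R -> R) (a b l : R) : Prop :=
  forall eps, 0 < eps -> exists delta, 0 < delta /\
    forall u v, a < u < a + delta -> b - delta < v < b ->
      exists pr : Riemann_integrable f u v, Rabs (RiemannInt pr - l) < eps.

Definition improper_int_inf (f : R -> R) (a l : R) : Prop :=
  forall eps, 0 < eps -> exists delta, 0 < delta /\
    forall u v, a < u < a + delta -> / delta < v ->
      exists pr : Riemann_integrable f u v, Rabs (RiemannInt pr - l) < eps.

(* "the" value satisfying P (chosen by Hilbert epsilon; meaningful when unique) *)
Definition the_real (P : R -> Prop) : R := epsilon (inhabits 0) P.

Definition Gamma (s : R) : R :=
  the_real (improper_int_inf (fun t => Rpower t (s - 1) * exp (- t)) 0).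

Definition Beta (p q : R) : R := Gamma p * Gamma q / Gamma (p + q).

Definition Ibeta (y p q : R) : R :=
  if Rle_dec y 0 then 0 else
  the_real (improper_int (fun t => Rpower t (p - 1) * Rpower (1 - t) (q - 1)) 0 y)
  / Beta p q.

Definition series (s : nat -> R) : R := the_real (infinite_sum s).

Definition ncbeta (p q x y : R) : R :=
  exp (- x / 2) *
  series (fun j => / INR (fact j) * (x / 2) ^ j * Ibeta y (p + INR j) q).

Fixpoint poch (a : R) (n : nat) : R :=
  match n with
  | O => 1
  | S m => poch a m * (a + INR m)
  end.

Definition kummerM (a b z : R) : R :=
  series (fun n => poch a n / poch b n * z ^ n / INR (fact n)).

Definition rpow (y p : R) : R := if Rle_dec y 0 then 0 else Rpower y p.

Definition deriv_seq (f : R -> R) (D : nat -> R -> R) : Prop :=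
  (forall t, D O t = f t) /\
  (forall j t, derivable_pt_lim (D j) t (D (S j) t)).

From Pilot Require Import Defs.
From Stdlib Require Import Reals Lra Lia Arith Factorial ClassicalEpsilon Classical FunctionalExtensionality.
From Coquelicot Require Import Coquelicot.
Open Scope R_scope.

(* With [z = x y / 2] and [J a = int_0^y t^(a-1) (1-t)^(q-1) dt], one has
   [Ibeta y (p+k) q = J (p+k) / Beta (p+k) q].  Integrating by parts gives the
   recurrence [a J a - (a+q) J (a+1) = y^a (1-y)^q], whose unrolling is the
   hypergeometric series [J a = y^a (1-y)^q / a * sum_j (a+q)_j/(a+1)_j y^j].
   Together with [Beta (p+k) q = Beta p q (p)_k/(p+q)_k], the [k]-th term of the
   series of [B_(p,q)(x,y)] is, up to the factor [y^p (1-y)^q / (p Beta p q)],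
   the sum of row [k] of the nonnegative array
     [a_(k,j) = z^k/k! y^j (p+q)_(k+j)/(p+1)_(k+j)],
   whose column [j] sums to [y^j (p+q)_j/(p+1)_j M(p+q+j, p+1+j, z)].  Tonelli's
   theorem for double series gives the first expansion (for [y = 0] all terms
   vanish).  Kummer's transformation
   [M(b-a,b,-z) = e^(-z) M(a,b,z)] (a Chu-Vandermonde identity on the Cauchy
   product) gives the second, and [M'(a,b,z) = a/b M(a+1,b+1,z)] identifies the
   column sums with [y^j d^j/dz^j M(p+q,p+1,z)]. *)

Lemma the_real_eq (P : R -> Prop) (l : R) :
  P l -> (forall l', P l' -> l' = l) -> the_real P = l.
Proof.
  intros Hl Hu. unfold the_real. apply Hu. apply epsilon_spec. now exists l.
Qed.

Lemma series_eq (s : nat -> R) (l : R) : infinite_sum s l -> series s = l.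
Proof.
  intros H. apply the_real_eq; auto. intros l' H'. eapply uniqueness_sum; eauto.
Qed.

Lemma infinite_sum_lim (s : nat -> R) (l : R) :
  infinite_sum s l <-> is_lim_seq (fun n => sum_f_R0 s n) l.
Proof.
  rewrite <- is_series_Reals. unfold is_series, is_lim_seq.
  split; apply filterlim_ext; intros n; now rewrite sum_n_Reals.
Qed.

Lemma infinite_sum_ext (f g : nat -> R) (l : R) :
  (forall n, f n = g n) -> infinite_sum f l -> infinite_sum g l.
Proof. rewrite <- !is_series_Reals. apply is_series_ext. Qed.

Lemma infinite_sum_scal (f : nat -> R) (l c : R) :
  infinite_sum f l -> infinite_sum (fun n => c * f n) (c * l).
Proof. rewrite <- !is_series_Reals. apply (is_series_scal_l c f l). Qed.

Lemma infinite_sum_first (f : nat -> R) :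
  (forall n, f (S n) = 0) -> infinite_sum f (f O).
Proof.
  intros H. apply infinite_sum_lim, (is_lim_seq_ext (fun _ => f O)).
  - intros n. induction n as [|n IH]; [reflexivity|]. rewrite tech5, H, <- IH. ring.
  - apply is_lim_seq_const.
Qed.

Section NonnegativeSeries.

Variable f : nat -> R.
Hypothesis f_nonneg : forall n, 0 <= f n.

Lemma partial_sum_le (l : R) : infinite_sum f l -> forall n, sum_f_R0 f n <= l.
Proof.
  intros H n. apply (is_lim_seq_incr_compare (fun n => sum_f_R0 f n)).
  - now apply infinite_sum_lim.
  - intros m. rewrite tech5. specialize (f_nonneg (S m)). lra.
Qed.

Lemma term_le_sum (l : R) : infinite_sum f l -> forall n, f n <= l.
Proof.
  intros H n. apply Rle_trans with (sum_f_R0 f n); [|now apply partial_sum_le].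
  destruct n as [|n]; simpl; [lra|].
  pose proof (cond_pos_sum f n f_nonneg). lra.
Qed.

Lemma bounded_partial_sums (M : R) :
  (forall n, sum_f_R0 f n <= M) -> exists l, infinite_sum f l /\ l <= M.
Proof.
  intros HM.
  assert (Hex : ex_finite_lim_seq (fun n => sum_f_R0 f n)).
  { apply ex_finite_lim_seq_incr with M; auto.
    intros n. rewrite tech5. specialize (f_nonneg (S n)). lra. }
  destruct Hex as [l Hl]. exists l. split.
  - now apply infinite_sum_lim.
  - exact (is_lim_seq_le _ (fun _ => M) _ _ HM Hl (is_lim_seq_const M)).
Qed.

End NonnegativeSeries.

(** * Tonelli's theorem for double series of nonnegative terms *)

Section Tonelli.

Variable a : nat -> nat -> R.
Variable row : nat -> R.
Variable L : R.
Hypothesis a_nonneg : forall k j, 0 <= a k j.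
Hypothesis row_sum : forall k, infinite_sum (a k) (row k).
Hypothesis total_sum : infinite_sum row L.

Lemma sum_f_R0_swap (K m : nat) :
  sum_f_R0 (fun k => sum_f_R0 (a k) m) K = sum_f_R0 (fun j => sum_f_R0 (fun k => a k j) K) m.
Proof.
  induction K as [|K IH]; simpl.
  - apply sum_eq. auto.
  - rewrite IH, <- plus_sum. apply sum_eq. auto.
Qed.

Lemma lim_sum_f_R0 (u : nat -> nat -> R) (l : nat -> R) (K : nat) :
  (forall k, is_lim_seq (u k) (l k)) ->
  is_lim_seq (fun m => sum_f_R0 (fun k => u k m) K) (sum_f_R0 l K).
Proof.
  intros H. induction K as [|K IH]; simpl; [apply H|]. apply is_lim_seq_plus'; auto.
Qed.

Lemma row_nonneg (k : nat) : 0 <= row k.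
Proof. apply Rle_trans with (a k O); auto. now apply (term_le_sum (a k)). Qed.

Lemma column_sum (j : nat) : infinite_sum (fun k => a k j) (series (fun k => a k j)).
Proof.
  destruct (bounded_partial_sums (fun k => a k j) (fun k => a_nonneg k j) L) as [l [Hl _]].
  - intros n. apply Rle_trans with (sum_f_R0 row n).
    + apply sum_Rle. intros k _. now apply (term_le_sum (a k)).
    + exact (partial_sum_le row row_nonneg L total_sum n).
  - now rewrite (series_eq _ _ Hl).
Qed.

Let col (j : nat) : R := series (fun k => a k j).

Lemma col_nonneg (j : nat) : 0 <= col j.
Proof.
  apply Rle_trans with (a O j); auto.
  exact (term_le_sum _ (fun k => a_nonneg k j) _ (column_sum j) O).
Qed.

Lemma col_partial_le (m : nat) (M : R) :
  (forall K, sum_f_R0 row K <= M) -> sum_f_R0 col m <= M.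
Proof.
  intros HM.
  assert (Hlim : is_lim_seq (fun K => sum_f_R0 (fun k => sum_f_R0 (a k) m) K) (sum_f_R0 col m)).
  { apply (is_lim_seq_ext (fun K => sum_f_R0 (fun j => sum_f_R0 (fun k => a k j) K) m)).
    - intros K. symmetry. apply sum_f_R0_swap.
    - apply (lim_sum_f_R0 (fun j K => sum_f_R0 (fun k => a k j) K)). intros j.
      apply infinite_sum_lim, column_sum. }
  refine (is_lim_seq_le _ (fun _ => M) _ _ _ Hlim (is_lim_seq_const M)). intros K.
  apply Rle_trans with (sum_f_R0 row K); auto.
  apply sum_Rle. intros k _. now apply (partial_sum_le (a k)).
Qed.

Lemma row_partial_le (K : nat) (M : R) :
  (forall m, sum_f_R0 col m <= M) -> sum_f_R0 row K <= M.
Proof.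
  intros HM.
  assert (Hlim : is_lim_seq (fun m => sum_f_R0 (fun k => sum_f_R0 (a k) m) K) (sum_f_R0 row K)).
  { apply lim_sum_f_R0. intros k. apply infinite_sum_lim, row_sum. }
  refine (is_lim_seq_le _ (fun _ => M) _ _ _ Hlim (is_lim_seq_const M)). intros m.
  rewrite sum_f_R0_swap. apply Rle_trans with (sum_f_R0 col m); auto.
  apply sum_Rle. intros j _.
  exact (partial_sum_le _ (fun k => a_nonneg k j) _ (column_sum j) K).
Qed.

Lemma tonelli : infinite_sum col L.
Proof.
  destruct (bounded_partial_sums col col_nonneg L) as [L' [HL' HL'L]].
  { intros m. apply col_partial_le, (partial_sum_le row row_nonneg L total_sum). }
  replace L with L'; auto. apply Rle_antisym; auto.
  refine (is_lim_seq_le _ (fun _ => L') _ _ _ (proj1 (infinite_sum_lim _ _) total_sum)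
           (is_lim_seq_const L')).
  intros K. apply row_partial_le, (partial_sum_le col col_nonneg L' HL').
Qed.

End Tonelli.

(** * Improper integrals *)

Definition near_upper (b : Rbar) (d v : R) : Prop :=
  match b with Finite b => b - d < v < b | p_infty => / d < v | m_infty => False end.

(* Improper Riemann integral over (a,b), in the style of [improper_int] and
   [improper_int_inf] of Defs, which are its instances [b] finite and [+oo]. *)
Definition improper_riemann (f : R -> R) (a : R) (b : Rbar) (l : R) : Prop :=
  forall eps, 0 < eps -> exists delta, 0 < delta /\
    forall u v, a < u < a + delta -> near_upper b delta v ->
      exists pr : Riemann_integrable f u v, Rabs (RiemannInt pr - l) < eps.

(* The same notion phrased with Coquelicot's integral, in which we work. *)
Definition improper (f : R -> R) (a : R) (b : Rbar) (l : R) : Prop :=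
  forall eps, 0 < eps -> exists delta, 0 < delta /\
    forall u v, a < u < a + delta -> near_upper b delta v ->
      ex_RInt f u v /\ Rabs (RInt f u v - l) < eps.

Lemma min_pos (d1 d2 : R) : 0 < d1 -> 0 < d2 -> exists d, 0 < d /\ d <= d1 /\ d <= d2.
Proof.
  intros. exists (Rmin d1 d2). split; [now apply Rmin_glb_lt|]. split; [apply Rmin_l|apply Rmin_r].
Qed.

Lemma near_upper_mono (b : Rbar) (d d' v : R) :
  0 < d' <= d -> near_upper b d' v -> near_upper b d v.
Proof.
  destruct b; simpl; intros Hd Hv; try tauto; [lra|].
  apply Rle_lt_trans with (/ d'); auto. apply Rinv_le_contravar; lra.
Qed.

Lemma near_upper_lt (b : Rbar) (d v : R) : near_upper b d v -> Rbar_lt v b.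
Proof. destruct b; simpl; tauto. Qed.

Lemma Rbar_lt_below (t v : R) (b : Rbar) : t <= v -> Rbar_lt v b -> Rbar_lt t b.
Proof. intros H1 H2. destruct b; simpl in *; auto; lra. Qed.

Lemma near_upper_beyond (a : R) (b : Rbar) : Rbar_lt a b ->
  exists d0, 0 < d0 /\ forall d v, 0 < d <= d0 -> near_upper b d v -> a + d0 < v.
Proof.
  intros Hab. destruct b as [b| |]; simpl in Hab; [| |destruct Hab].
  - exists ((b - a) / 2). split; [lra|]. simpl. intros d v Hd Hv. lra.
  - pose proof (Rabs_pos a). pose proof (Rle_abs a).
    exists (/ (Rabs a + 1)). split; [apply Rinv_0_lt_compat; lra|].
    simpl. intros d v Hd Hv.
    assert (Hinv : / (/ (Rabs a + 1)) <= / d) by (apply Rinv_le_contravar; lra).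
    rewrite Rinv_inv in Hinv.
    assert (/ (Rabs a + 1) <= 1) by (rewrite <- Rinv_1; apply Rinv_le_contravar; lra).
    lra.
Qed.

Lemma near_upper_inhabited (a : R) (b : Rbar) :
  Rbar_lt a b -> forall d, 0 < d -> exists v, near_upper b d v.
Proof.
  intros Hab d Hd.
  destruct b as [b| |]; simpl in *; [exists (b - d / 2); lra|exists (/ d + 1); lra|contradiction].
Qed.

Lemma pick_interval (a : R) (b : Rbar) : Rbar_lt a b -> forall d, 0 < d ->
  exists u v, a < u < a + d /\ near_upper b d v /\ u < v.
Proof.
  intros Hab d Hd. destruct (near_upper_beyond a b Hab) as [d0 [Hd0 Hbeyond]].
  destruct (min_pos d d0 Hd Hd0) as [e [He [Hed Hed0]]].
  destruct (near_upper_inhabited a b Hab e He) as [v Hv]. exists (a + e / 2), v. split; [lra|]. split.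
  - apply near_upper_mono with e; auto; lra.
  - pose proof (Hbeyond e v (conj He Hed0) Hv). lra.
Qed.

Lemma improper_riemann_of_improper (f : R -> R) (a : R) (b : Rbar) (l : R) :
  improper f a b l -> improper_riemann f a b l.
Proof.
  intros H eps Heps. destruct (H eps Heps) as [d [Hd H']]. exists d; split; auto.
  intros u v Hu Hv. destruct (H' u v Hu Hv) as [Hex Hl].
  exists (ex_RInt_Reals_0 _ _ _ Hex). now rewrite <- RInt_Reals.
Qed.

(* Improper integrals are unique (the endpoint neighbourhoods contain common intervals). *)
Lemma improper_riemann_unique (f : R -> R) (a : R) (b : Rbar) (l1 l2 : R) :
  Rbar_lt a b -> improper_riemann f a b l1 -> improper_riemann f a b l2 -> l1 = l2.
Proof.
  intros Hab H1 H2. apply NNPP. intros Hne.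
  set (e := Rabs (l1 - l2) / 2).
  assert (He : 0 < e).
  { assert (0 < Rabs (l1 - l2)) by (apply Rabs_pos_lt; intro; apply Hne; lra). unfold e; lra. }
  destruct (H1 e He) as [d1 [Hd1 H1']]. destruct (H2 e He) as [d2 [Hd2 H2']].
  destruct (min_pos d1 d2 Hd1 Hd2) as [d [Hd [Hdd1 Hdd2]]].
  destruct (pick_interval a b Hab d Hd) as [u [v [Hu [Hv _]]]].
  destruct (H1' u v) as [pr1 E1]; [lra|apply near_upper_mono with d; auto|].
  destruct (H2' u v) as [pr2 E2]; [lra|apply near_upper_mono with d; auto|].
  rewrite (RiemannInt_P5 pr1 pr2) in E1.
  assert (Rabs (l1 - l2) < 2 * e); [|unfold e in *; lra].
  replace (l1 - l2) with (-(RiemannInt pr2 - l1) + (RiemannInt pr2 - l2)) by ring.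
  eapply Rle_lt_trans; [apply Rabs_triang|]. rewrite Rabs_Ropp. lra.
Qed.

Lemma improper_unique (f : R -> R) (a : R) (b : Rbar) (l1 l2 : R) :
  Rbar_lt a b -> improper f a b l1 -> improper f a b l2 -> l1 = l2.
Proof.
  intros Hab H1 H2.
  apply (improper_riemann_unique f a b); auto; now apply improper_riemann_of_improper.
Qed.

Lemma improper_int_value (f : R -> R) (a b l : R) :
  a < b -> improper f a (Finite b) l -> the_real (improper_int f a b) = l.
Proof.
  intros Hab H. apply the_real_eq; [exact (improper_riemann_of_improper _ _ _ _ H)|].
  intros l' H'. apply (improper_riemann_unique f a (Finite b)); auto.
  now apply improper_riemann_of_improper.
Qed.

Lemma improper_int_inf_value (f : R -> R) (a l : R) :
  improper f a p_infty l -> the_real (improper_int_inf f a) = l.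
Proof.
  intros H. apply the_real_eq; [exact (improper_riemann_of_improper _ _ _ _ H)|].
  intros l' H'. apply (improper_riemann_unique f a p_infty); simpl; auto.
  now apply improper_riemann_of_improper.
Qed.

Section OpenInterval.

Variables (f : R -> R) (a : R) (b : Rbar).
Hypothesis f_cont : forall t, a < t -> Rbar_lt t b -> continuous f t.

Lemma ex_RInt_open (u v : R) :
  a < u -> a < v -> Rbar_lt u b -> Rbar_lt v b -> ex_RInt f u v.
Proof.
  intros Hu Hv Hub Hvb. apply (@ex_RInt_continuous R_CompleteNormedModule). intros t Ht.
  apply f_cont.
  - assert (a < Rmin u v) by (apply Rmin_glb_lt; auto). lra.
  - destruct (Rle_dec u v).
    + rewrite Rmax_right in Ht by lra. apply Rbar_lt_below with v; tauto.
    + rewrite Rmax_left in Ht by lra. apply Rbar_lt_below with u; tauto.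
Qed.

Lemma RInt_grow (u c d v : R) :
  (forall t, a < t -> Rbar_lt t b -> 0 <= f t) ->
  a < u -> u <= c -> c <= d -> d <= v -> Rbar_lt v b -> RInt f c d <= RInt f u v.
Proof.
  intros Hpos Hu Huc Hcd Hdv Hvb.
  assert (Hex : forall s t, u <= s -> s <= v -> u <= t -> t <= v -> ex_RInt f s t).
  { intros. apply ex_RInt_open; try lra; apply Rbar_lt_below with v; auto. }
  assert (Hnonneg : forall s t, u <= s <= t -> t <= v -> 0 <= RInt f s t).
  { intros s t Hs Ht. apply RInt_ge_0; [lra|apply Hex; lra|].
    intros x Hx. apply Hpos; [lra|]. apply Rbar_lt_below with v; auto; lra. }
  assert (Hchasles : RInt f u v = RInt f u c + RInt f c d + RInt f d v).
  { rewrite <- (RInt_Chasles f u c v), <- (RInt_Chasles f c d v); try (apply Hex; lra).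
    unfold plus; simpl; ring. }
  pose proof (Hnonneg u c). pose proof (Hnonneg d v). lra.
Qed.

(* A nonnegative integrand whose integrals stay bounded is improperly integrable:
   the improper integral is the supremum of the integrals over subintervals. *)
Lemma improper_exists_nonneg (M : R) :
  Rbar_lt a b ->
  (forall t, a < t -> Rbar_lt t b -> 0 <= f t) ->
  (forall u v, a < u -> u <= v -> Rbar_lt v b -> RInt f u v <= M) ->
  exists l, improper f a b l.
Proof.
  intros Hab Hpos HM.
  set (E := fun r => exists u v, a < u /\ u <= v /\ Rbar_lt v b /\ r = RInt f u v).
  assert (HEb : bound E) by (exists M; intros r [u [v [H1 [H2 [H3 ->]]]]]; now apply HM).
  assert (HEn : exists r, E r).
  { destruct (pick_interval a b Hab 1 Rlt_0_1) as [u [v [Hu [Hv Huv]]]].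
    exists (RInt f u v), u, v. repeat split; try lra. eapply near_upper_lt; eauto. }
  destruct (completeness E HEb HEn) as [l [Hub Hlub]].
  exists l. intros eps Heps.
  assert (Hclose : exists r, E r /\ l - eps < r).
  { apply NNPP. intro Hn. assert (l <= l - eps); [|lra].
    apply Hlub. intros r Hr. apply Rnot_lt_le. intro Hlt. apply Hn. now exists r. }
  destruct Hclose as [r [[u0 [v0 [Hu0 [Huv0 [Hv0 ->]]]]] Hr]].
  destruct (near_upper_beyond v0 b Hv0) as [d0 [Hd0 Hbeyond]].
  destruct (min_pos (u0 - a) d0 ltac:(lra) Hd0) as [d [Hd [Hdu Hdd0]]].
  exists d. split; auto. intros u v Hu Hv.
  assert (Hvv0 : v0 < v) by (pose proof (Hbeyond d v (conj Hd Hdd0) Hv); lra).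
  assert (Hvb : Rbar_lt v b) by (eapply near_upper_lt; eauto).
  split; [apply ex_RInt_open; auto; try lra; apply Rbar_lt_below with v; auto; lra|].
  assert (RInt f u0 v0 <= RInt f u v) by (apply RInt_grow; auto; lra).
  assert (RInt f u v <= l) by (apply Hub; exists u, v; repeat split; auto; lra).
  apply Rabs_def1; lra.
Qed.

End OpenInterval.

Lemma RInt_scal_R (f : R -> R) (u v c : R) :
  ex_RInt f u v -> RInt (fun t => c * f t) u v = c * RInt f u v.
Proof. intros H. exact (@RInt_scal R_CompleteNormedModule f u v c H). Qed.

Lemma ex_RInt_scal_R (f : R -> R) (u v c : R) :
  ex_RInt f u v -> ex_RInt (fun t => c * f t) u v.
Proof. intros H. exact (@ex_RInt_scal R_NormedModule f u v c H). Qed.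

Definition lim_lower (phi : R -> R) (a l : R) : Prop :=
  forall eps, 0 < eps -> exists delta, 0 < delta /\
    forall u, a < u < a + delta -> Rabs (phi u - l) < eps.
Definition lim_upper (phi : R -> R) (b : Rbar) (l : R) : Prop :=
  forall eps, 0 < eps -> exists delta, 0 < delta /\
    forall v, near_upper b delta v -> Rabs (phi v - l) < eps.

Lemma improper_from_identity (f1 f2 phi : R -> R) (a : R) (b : Rbar)
    (l2 c1 c2 pa pb : R) :
  Rbar_lt a b -> c1 <> 0 -> improper f2 a b l2 ->
  (forall t, a < t -> Rbar_lt t b -> continuous f1 t) ->
  (forall u v, a < u -> u < v -> Rbar_lt v b ->
     c1 * RInt f1 u v + c2 * RInt f2 u v = phi v - phi u) ->
  lim_lower phi a pa -> lim_upper phi b pb ->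
  improper f1 a b ((pb - pa - c2 * l2) / c1).
Proof.
  intros Hab Hc1 H2 Hcont Hid Ha Hb eps Heps.
  assert (Hc1p : 0 < Rabs c1) by (apply Rabs_pos_lt; auto).
  pose proof (Rabs_pos c2).
  set (e := eps * Rabs c1 / (Rabs c2 + 3)).
  assert (He : 0 < e) by (unfold e; apply Rdiv_lt_0_compat; [apply Rmult_lt_0_compat|]; lra).
  destruct (H2 e He) as [d2 [Hd2 H2']].
  destruct (Ha e He) as [d3 [Hd3 H3']]. destruct (Hb e He) as [d4 [Hd4 H4']].
  destruct (near_upper_beyond a b Hab) as [d0 [Hd0 Hbeyond]].
  destruct (min_pos d0 d2 Hd0 Hd2) as [d' [Hd' [Q0 Q2]]].
  destruct (min_pos d3 d4 Hd3 Hd4) as [d'' [Hd'' [Q3 Q4]]].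
  destruct (min_pos d' d'' Hd' Hd'') as [d [Hd [Q' Q'']]].
  exists d. split; auto. intros u v Hu Hv.
  assert (Hav : a + d0 < v) by (apply (Hbeyond d); auto; lra).
  assert (Hvb := near_upper_lt _ _ _ Hv).
  assert (Hub : Rbar_lt u b) by (apply Rbar_lt_below with v; auto; lra).
  split; [apply (ex_RInt_open f1 a b Hcont); auto; lra|].
  destruct (H2' u v) as [_ E2]; [lra|apply near_upper_mono with d; auto; lra|].
  assert (E3 := H3' u ltac:(lra)).
  assert (E4 := H4' v ltac:(apply near_upper_mono with d; auto; lra)).
  assert (Hi := Hid u v ltac:(lra) ltac:(lra) Hvb).
  assert (Heq : RInt f1 u v - (pb - pa - c2 * l2) / c1 =
     ((phi v - pb) - (phi u - pa) - c2 * (RInt f2 u v - l2)) / c1).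
  { replace (phi v) with (c1 * RInt f1 u v + c2 * RInt f2 u v + phi u) by lra. field; auto. }
  rewrite Heq. unfold Rdiv. rewrite Rabs_mult, Rabs_inv.
  apply Rmult_lt_reg_r with (Rabs c1); auto.
  rewrite Rmult_assoc, Rinv_l, Rmult_1_r by lra.
  eapply Rle_lt_trans; [apply Rabs_triang|].
  eapply Rle_lt_trans; [apply Rplus_le_compat_r, Rabs_triang|].
  rewrite !Rabs_Ropp, Rabs_mult.
  assert (Rabs c2 * Rabs (RInt f2 u v - l2) <= Rabs c2 * e) by (apply Rmult_le_compat_l; lra).
  assert (e * (Rabs c2 + 3) = eps * Rabs c1) by (unfold e; field; lra).
  nra.
Qed.

Lemma improper_identity (f1 f2 phi : R -> R) (a : R) (b : Rbar) (l1 l2 c1 c2 pa pb : R) :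
  Rbar_lt a b -> c1 <> 0 -> improper f1 a b l1 -> improper f2 a b l2 ->
  (forall t, a < t -> Rbar_lt t b -> continuous f1 t) ->
  (forall u v, a < u -> u < v -> Rbar_lt v b ->
     c1 * RInt f1 u v + c2 * RInt f2 u v = phi v - phi u) ->
  lim_lower phi a pa -> lim_upper phi b pb ->
  c1 * l1 + c2 * l2 = pb - pa.
Proof.
  intros Hab Hc1 H1 H2 Hcont Hid Ha Hb.
  rewrite (improper_unique f1 a b l1 _ Hab H1
             (improper_from_identity f1 f2 phi a b l2 c1 c2 pa pb Hab Hc1 H2 Hcont Hid Ha Hb)).
  field; auto.
Qed.

Lemma improper_le (f g : R -> R) (a : R) (b : Rbar) (l1 l2 : R) :
  Rbar_lt a b -> improper f a b l1 -> improper g a b l2 ->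
  (forall t, a < t -> Rbar_lt t b -> f t <= g t) -> l1 <= l2.
Proof.
  intros Hab H1 H2 Hfg. apply Rnot_lt_le. intro Hlt.
  set (eps := (l1 - l2) / 2).
  assert (He : 0 < eps) by (unfold eps; lra).
  destruct (H1 eps He) as [d1 [Hd1 H1']]. destruct (H2 eps He) as [d2 [Hd2 H2']].
  destruct (min_pos d1 d2 Hd1 Hd2) as [d [Hd [Hdd1 Hdd2]]].
  destruct (pick_interval a b Hab d Hd) as [u [v [Hu [Hv Huv]]]].
  destruct (H1' u v) as [X1 E1]; [lra|apply near_upper_mono with d; auto|].
  destruct (H2' u v) as [X2 E2]; [lra|apply near_upper_mono with d; auto|].
  assert (RInt f u v <= RInt g u v).
  { apply RInt_le; auto; try lra. intros t Ht. apply Hfg; [lra|].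
    apply Rbar_lt_below with v; [lra|]. eapply near_upper_lt; eauto. }
  apply Rabs_def2 in E1. apply Rabs_def2 in E2. unfold eps in *. lra.
Qed.

Lemma improper_scal (f : R -> R) (a : R) (b : Rbar) (l c : R) :
  improper f a b l -> improper (fun t => c * f t) a b (c * l).
Proof.
  intros H eps Heps. pose proof (Rabs_pos c).
  destruct (H (eps / (Rabs c + 1))) as [d [Hd H']]; [apply Rdiv_lt_0_compat; lra|].
  exists d; split; auto. intros u v Hu Hv. destruct (H' u v Hu Hv) as [Hex E].
  split; [now apply ex_RInt_scal_R|]. rewrite RInt_scal_R by exact Hex.
  replace (c * RInt f u v - c * l) with (c * (RInt f u v - l)) by ring.
  rewrite Rabs_mult.
  apply Rle_lt_trans with (Rabs c * (eps / (Rabs c + 1))); [apply Rmult_le_compat_l; lra|].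
  apply Rmult_lt_reg_r with (Rabs c + 1); [lra|]. field_simplify; lra.
Qed.

Lemma improper_ge_RInt (f : R -> R) (a : R) (b : Rbar) (l c d : R) :
  (forall t, a < t -> Rbar_lt t b -> continuous f t) ->
  (forall t, a < t -> Rbar_lt t b -> 0 <= f t) ->
  improper f a b l -> a < c -> c <= d -> Rbar_lt d b -> RInt f c d <= l.
Proof.
  intros Hcont Hpos H Hc Hcd Hdb. apply Rnot_lt_le. intros Hlt.
  destruct (H (RInt f c d - l) ltac:(lra)) as [d1 [Hd1 H']].
  destruct (near_upper_beyond d b Hdb) as [d0 [Hd0 Hbeyond]].
  destruct (min_pos d1 d0 Hd1 Hd0) as [e' [He' [Q1 Q0]]].
  destruct (min_pos e' (c - a) He' ltac:(lra)) as [e [He [Q Qc]]].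
  destruct (near_upper_inhabited d b Hdb e He) as [v Hv].
  assert (Hdv : d < v) by (pose proof (Hbeyond e v ltac:(lra) Hv); lra).
  destruct (H' (a + e / 2) v) as [_ E]; [lra|apply near_upper_mono with e; auto; lra|].
  assert (RInt f c d <= RInt f (a + e / 2) v).
  { apply (RInt_grow f a b Hcont); auto; try lra. eapply near_upper_lt; eauto. }
  apply Rabs_def2 in E. lra.
Qed.

Lemma Rpower_pos (x c : R) : 0 < Rpower x c.
Proof. apply exp_pos. Qed.

Lemma Rpower_1_base (c : R) : Rpower 1 c = 1.
Proof. unfold Rpower. rewrite ln_1, Rmult_0_r. apply exp_0. Qed.

Lemma Rpower_le_1 (t c : R) : 0 < t <= 1 -> 0 <= c -> Rpower t c <= 1.
Proof.
  intros Ht Hc. rewrite <- (Rpower_1_base c).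
  destruct Hc as [Hc|<-]; [apply Rle_Rpower_l; lra|rewrite !Rpower_O; lra].
Qed.

Lemma Rpower_succ (t c : R) : 0 < t -> Rpower t c = t * Rpower t (c - 1).
Proof.
  intros Ht. replace c with ((c - 1) + 1) at 1 by ring. rewrite Rpower_plus, Rpower_1 by auto. ring.
Qed.

Lemma Rpower_small (c eps u : R) :
  0 < c -> 0 < eps -> 0 < u < Rpower eps (/ c) -> Rpower u c < eps.
Proof.
  intros Hc He Hu. replace eps with (Rpower (Rpower eps (/ c)) c).
  - apply Rlt_Rpower_l; auto.
  - rewrite Rpower_mult, Rinv_l by lra. apply Rpower_1; auto.
Qed.

Lemma is_derive_Rpower (c t : R) :
  0 < t -> is_derive (fun x => Rpower x c) t (c * Rpower t (c - 1)).
Proof. intros Ht. apply is_derive_Reals. now apply derivable_pt_lim_power. Qed.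

Lemma is_derive_Rpower_1m (c t : R) : t < 1 ->
  is_derive (fun x => Rpower (1 - x) c) t (- c * Rpower (1 - t) (c - 1)).
Proof.
  intros Ht.
  replace (- c * Rpower (1 - t) (c - 1)) with (scal (-1) (c * Rpower (1 - t) (c - 1)))
    by (unfold scal; simpl; unfold mult; simpl; ring).
  apply (is_derive_comp (fun x => Rpower x c) (fun x => 1 - x)).
  - apply is_derive_Rpower; lra.
  - auto_derive; auto; ring.
Qed.

Lemma is_derive_continuous (f : R -> R) (t df : R) : is_derive f t df -> continuous f t.
Proof. intros H. apply (@ex_derive_continuous R_AbsRing R_NormedModule). now exists df. Qed.

Lemma continuous_mult_R (f g : R -> R) (x : R) :
  continuous f x -> continuous g x -> continuous (fun t => f t * g t) x.
Proof. intros; now apply (continuous_mult f g). Qed.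

Lemma continuous_Rpower (c t : R) : 0 < t -> continuous (fun x => Rpower x c) t.
Proof. intros Ht. eapply is_derive_continuous, is_derive_Rpower, Ht. Qed.

Lemma continuous_Rpower_1m (c t : R) : t < 1 -> continuous (fun x => Rpower (1 - x) c) t.
Proof. intros Ht. eapply is_derive_continuous, is_derive_Rpower_1m, Ht. Qed.

Lemma continuous_exp_opp (t : R) : continuous (fun x => exp (- x)) t.
Proof. apply is_derive_continuous with (- exp (- t)). auto_derive; auto; ring. Qed.

Lemma RInt_antiderivative (f F : R -> R) (u v : R) :
  (forall x, Rmin u v <= x <= Rmax u v -> is_derive F x (f x)) ->
  (forall x, Rmin u v <= x <= Rmax u v -> continuous f x) ->
  RInt f u v = F v - F u.
Proof.
  intros Hd Hc. apply is_RInt_unique, (@is_RInt_derive R_CompleteNormedModule); auto.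
Qed.

Lemma RInt_combination (f1 f2 phi : R -> R) (c1 c2 u v : R) :
  (forall x, Rmin u v <= x <= Rmax u v -> is_derive phi x (c1 * f1 x + c2 * f2 x)) ->
  (forall x, Rmin u v <= x <= Rmax u v -> continuous f1 x /\ continuous f2 x) ->
  c1 * RInt f1 u v + c2 * RInt f2 u v = phi v - phi u.
Proof.
  intros Hd Hc.
  assert (Hex : forall f : R -> R,
             (forall x, Rmin u v <= x <= Rmax u v -> continuous f x) -> ex_RInt f u v).
  { intros f Hf. apply (@ex_RInt_continuous R_CompleteNormedModule). exact Hf. }
  assert (Hex1 : ex_RInt f1 u v) by (apply Hex; intros; now apply Hc).
  assert (Hex2 : ex_RInt f2 u v) by (apply Hex; intros; now apply Hc).
  rewrite <- (RInt_scal_R f1), <- (RInt_scal_R f2) by assumption.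
  rewrite <- (@RInt_plus R_CompleteNormedModule) by (apply ex_RInt_scal_R; assumption).
  apply RInt_antiderivative; auto.
  intros x Hx. destruct (Hc x Hx) as [H1 H2].
  apply (continuous_plus (fun t => c1 * f1 t) (fun t => c2 * f2 t));
    apply continuous_mult_R; auto; apply continuous_const.
Qed.

Lemma exp_series (w : R) : infinite_sum (fun n => w ^ n / INR (fact n)) (exp w).
Proof.
  apply is_series_Reals. eapply is_series_ext; [|exact (is_exp_Reals w)]. intros n. simpl.
  rewrite pow_n_pow. unfold scal; simpl; unfold mult; simpl. unfold Rdiv. ring.

Qed.

Lemma exp_term_le (w : R) (n : nat) : 0 <= w -> w ^ n / INR (fact n) <= exp w.
Proof.
  intros Hw. apply (term_le_sum (fun n => w ^ n / INR (fact n))); [|apply exp_series].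
  intros k. apply Rdiv_le_0_compat; [now apply pow_le|apply INR_fact_lt_0].
Qed.

Lemma Rpower_le_exp_half (c t : R) (n : nat) : 0 < t -> 0 <= c <= INR n ->
  Rpower t c <= 2 ^ n * INR (fact n) * exp (/ 2) * exp (t / 2).
Proof.
  intros Ht Hc.
  assert (Hpow : Rpower t c <= (1 + t) ^ n).
  { rewrite <- Rpower_pow by lra. apply Rle_trans with (Rpower (1 + t) c).
    - destruct (proj1 Hc) as [Hc0|<-]; [apply Rle_Rpower_l; lra|rewrite !Rpower_O; lra].
    - apply Rle_Rpower; lra. }
  assert (Hexp := exp_term_le ((1 + t) / 2) n ltac:(lra)).
  pose proof (INR_fact_lt_0 n).
  replace (2 ^ n * INR (fact n) * exp (/ 2) * exp (t / 2)) with (2 ^ n * INR (fact n) * (exp (/ 2) * exp (t / 2))) by ring.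
  replace (exp (/ 2) * exp (t / 2)) with (exp ((1 + t) / 2)) by (rewrite <- exp_plus; f_equal; lra).
  replace ((1 + t) ^ n) with (2 ^ n * INR (fact n) * (((1 + t) / 2) ^ n / INR (fact n))) in Hpow.
  - apply Rle_trans with (1 := Hpow). apply Rmult_le_compat_l; auto.
    apply Rmult_le_pos; [apply pow_le; lra|lra].
  - unfold Rdiv. rewrite Rpow_mult_distr, pow_inv. field. split; [lra|apply pow_nonzero; lra].
Qed.

Lemma lim_lower_0 (phi : R -> R) (c : R) : 0 < c ->
  (forall u, 0 < u < 1 -> 0 <= phi u <= Rpower u c) -> lim_lower phi 0 0.
Proof.
  intros Hc Hphi eps He. exists (Rmin (Rpower eps (/ c)) 1).
  split; [apply Rmin_glb_lt; [apply Rpower_pos|lra]|].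
  intros u Hu. pose proof (Rmin_l (Rpower eps (/ c)) 1) as Hm1.
  pose proof (Rmin_r (Rpower eps (/ c)) 1) as Hm2.
  rewrite Rminus_0_r. destruct (Hphi u ltac:(lra)) as [Hlo Hhi].
  rewrite Rabs_pos_eq by exact Hlo.
  apply Rle_lt_trans with (Rpower u c); auto. apply Rpower_small; auto; lra.
Qed.

Lemma lim_upper_of_is_lim (phi : R -> R) (l : R) :
  is_lim phi p_infty l -> lim_upper phi p_infty l.
Proof.
  intros H eps He. destruct (proj2 (is_lim_spec _ _ _) H (mkposreal eps He)) as [M HM].
  pose proof (Rabs_pos M). pose proof (Rle_abs M).
  exists (/ (Rabs M + 1)). split; [apply Rinv_0_lt_compat; lra|].
  simpl. intros v Hv. rewrite Rinv_inv in Hv. apply HM. lra.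
Qed.

(* [t^s e^(-t) -> 0] as [t -> +oo], written as [exp (t (s ln t / t - 1))]. *)
Lemma is_lim_Rpower_exp (s : R) : is_lim (fun t => Rpower t s * exp (- t)) p_infty 0.
Proof.
  apply (is_lim_ext_loc (fun t => exp (t * (s * (ln t / t) - 1)))).
  { exists 0. intros t Ht. unfold Rpower. rewrite <- exp_plus. f_equal. field. lra. }
  assert (Hin : is_lim (fun t => s * (ln t / t) - 1) p_infty (s * 0 - 1)).
  { apply (is_lim_minus _ _ _ (s * 0) 1); [|apply is_lim_const|reflexivity].
    apply (is_lim_scal_l _ s _ 0), is_lim_div_ln_p. }
  replace (s * 0 - 1) with (-1) in Hin by ring.
  assert (Hm := is_lim_mult (fun x => x) _ p_infty p_infty (-1) (is_lim_id p_infty) Hin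
                  ltac:(simpl; lra)).
  assert (E : Rbar_mult p_infty (-1) = m_infty)
    by (simpl; case Rle_dec; intros; [exfalso; lra|reflexivity]).
  rewrite E in Hm.
  apply (is_lim_comp exp (fun t => t * (s * (ln t / t) - 1)) p_infty 0 m_infty);
    [apply is_lim_exp_m|exact Hm|].
  exists 0. intros; discriminate.
Qed.

(** * The Gamma function *)

Definition gamma_integrand (s t : R) : R := Rpower t (s - 1) * exp (- t).

(* Integrating by parts against this boundary term relates [Gamma s] and [Gamma (s+1)]. *)
Definition gamma_boundary (s t : R) : R := Rpower t s * exp (- t).

Lemma gamma_integrand_pos (s t : R) : 0 < gamma_integrand s t.
Proof. apply Rmult_lt_0_compat; [apply Rpower_pos|apply exp_pos]. Qed.

Lemma gamma_integrand_cont (s t : R) : 0 < t -> continuous (gamma_integrand s) t.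
Proof.
  intros Ht. apply continuous_mult_R; [now apply continuous_Rpower|apply continuous_exp_opp].
Qed.

(* [(t^s e^(-t))' = s t^(s-1) e^(-t) - t^s e^(-t)], integrated over [u,v]. *)
Lemma gamma_by_parts (s u v : R) : 0 < u -> 0 < v ->
  s * RInt (gamma_integrand s) u v + (-1) * RInt (gamma_integrand (s + 1)) u v
  = gamma_boundary s v - gamma_boundary s u.
Proof.
  intros Hu Hv. assert (Hmin : 0 < Rmin u v) by now apply Rmin_glb_lt.
  apply RInt_combination; intros x Hx.
  - unfold gamma_boundary, gamma_integrand. replace (s + 1 - 1) with s by ring.
    replace (s * (Rpower x (s - 1) * exp (- x)) + -1 * (Rpower x s * exp (- x)))
      with (s * Rpower x (s - 1) * exp (- x) + Rpower x s * (- exp (- x))) by ring.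
    apply (is_derive_mult (fun t => Rpower t s) (fun t => exp (- t))).
    + apply is_derive_Rpower. lra.
    + auto_derive; auto; ring.
    + intros; apply Rmult_comm.
  - split; apply gamma_integrand_cont; lra.
Qed.

Lemma gamma_boundary_lim_0 (s : R) : 0 < s -> lim_lower (gamma_boundary s) 0 0.
Proof.
  intros Hs. apply lim_lower_0 with s; auto. intros u Hu. unfold gamma_boundary.
  pose proof (Rpower_pos u s).
  assert (exp (- u) <= 1) by (rewrite <- exp_0; left; apply exp_increasing; lra).
  pose proof (exp_pos (- u)). split; nra.
Qed.

Lemma gamma_boundary_lim_inf (s : R) : lim_upper (gamma_boundary s) p_infty 0.
Proof. apply lim_upper_of_is_lim, is_lim_Rpower_exp. Qed.

Lemma gamma_improper_succ (s L : R) : 0 < s ->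
  improper (gamma_integrand s) 0 p_infty L ->
  improper (gamma_integrand (s + 1)) 0 p_infty (s * L).
Proof.
  intros Hs H. replace (s * L) with ((0 - 0 - s * L) / (-1)) by field.
  apply (improper_from_identity _ (gamma_integrand s) (gamma_boundary s)); simpl; auto; try lra.
  - intros t Ht _. now apply gamma_integrand_cont.
  - intros u v Hu Huv _. rewrite <- gamma_by_parts by lra. ring.
  - now apply gamma_boundary_lim_0.
  - apply gamma_boundary_lim_inf.
Qed.

Lemma gamma_improper_pred (s L : R) : 0 < s ->
  improper (gamma_integrand (s + 1)) 0 p_infty L ->
  improper (gamma_integrand s) 0 p_infty (L / s).
Proof.
  intros Hs H. replace (L / s) with ((0 - 0 - (-1) * L) / s) by (field; lra).
  apply (improper_from_identity _ (gamma_integrand (s + 1)) (gamma_boundary s));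
    simpl; auto; try lra.
  - intros t Ht _. now apply gamma_integrand_cont.
  - intros u v Hu Huv _. apply gamma_by_parts; lra.
  - now apply gamma_boundary_lim_0.
  - apply gamma_boundary_lim_inf.
Qed.

(* For [s >= 1] the integrand is dominated by [C exp (-t/2)], whose integrals are
   bounded by [2 C]. *)
Lemma gamma_improper_ge_1 (s : R) : 1 <= s -> exists L, improper (gamma_integrand s) 0 p_infty L.
Proof.
  intros Hs. destruct (INR_unbounded s) as [n Hn].
  set (C := 2 ^ n * INR (fact n) * exp (/ 2)).
  assert (HC : 0 < C).
  { apply Rmult_lt_0_compat; [apply Rmult_lt_0_compat|apply exp_pos];
      [apply pow_lt; lra|apply INR_fact_lt_0]. }
  set (h := fun t => C * exp (- t / 2)).
  assert (Hh : forall u v, RInt h u v = -2 * C * exp (- v / 2) - (-2 * C * exp (- u / 2))).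
  { intros u v. apply (RInt_antiderivative h (fun t => -2 * C * exp (- t / 2))).
    - intros x _. unfold h. auto_derive; auto; unfold Rdiv; field.
    - intros x _. apply (is_derive_continuous _ _ (C * (- / 2) * exp (- x / 2))).
      unfold h. auto_derive; auto; unfold Rdiv; field. }
  apply (improper_exists_nonneg _ 0 p_infty) with (2 * C); simpl; auto.
  - intros t Ht _. now apply gamma_integrand_cont.
  - intros t _ _. left; apply gamma_integrand_pos.
  - intros u v Hu Huv _. apply Rle_trans with (RInt h u v).
    + apply RInt_le; auto.
      * apply (ex_RInt_open _ 0 p_infty); simpl; auto; try lra.
        intros t Ht _. now apply gamma_integrand_cont.
      * apply (@ex_RInt_continuous R_CompleteNormedModule). intros x _.
        apply continuous_mult_R; [apply continuous_const|].
        apply (is_derive_continuous _ _ (- / 2 * exp (- x / 2))). auto_derive; auto; unfold Rdiv; field.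
      * intros t Ht. unfold gamma_integrand, h.
        replace (exp (- t / 2)) with (exp (t / 2) * exp (- t))
          by (rewrite <- exp_plus; f_equal; lra).
        rewrite <- Rmult_assoc. apply Rmult_le_compat_r; [left; apply exp_pos|].
        apply Rpower_le_exp_half; lra.
    + rewrite Hh. pose proof (exp_pos (- v / 2)).
      assert (exp (- u / 2) <= 1) by (rewrite <- exp_0; left; apply exp_increasing; lra).
      nra.
Qed.

(* [Gamma s] is the value of its improper integral for every [s > 0]; the range
   [0 < s < 1] is reduced to [s + 1 >= 1] by [gamma_improper_pred]. *)
Lemma gamma_improper (s : R) : 0 < s -> improper (gamma_integrand s) 0 p_infty (Gamma s).
Proof.
  intros Hs.
  assert (Hex : exists L, improper (gamma_integrand s) 0 p_infty L).
  { destruct (Rle_dec 1 s); [now apply gamma_improper_ge_1|].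
    destruct (gamma_improper_ge_1 (s + 1)) as [L HL]; [lra|].
    exists (L / s). now apply gamma_improper_pred. }
  destruct Hex as [L HL]. unfold Gamma. fold (gamma_integrand s).
  now rewrite (improper_int_inf_value _ _ _ HL).
Qed.

Lemma Gamma_succ (s : R) : 0 < s -> Gamma (s + 1) = s * Gamma s.
Proof.
  intros Hs. apply (improper_unique (gamma_integrand (s + 1)) 0 p_infty); simpl; auto.
  - apply gamma_improper. lra.
  - now apply gamma_improper_succ, gamma_improper.
Qed.

(* [Gamma s >= int_1^2 t^(s-1) e^(-t) dt > 0]. *)
Lemma Gamma_pos (s : R) : 0 < s -> 0 < Gamma s.
Proof.
  intros Hs. apply Rlt_le_trans with (RInt (gamma_integrand s) 1 2).
  - apply RInt_gt_0; try lra.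
    + intros x _. apply gamma_integrand_pos.
    + intros x Hx. apply gamma_integrand_cont. lra.
  - apply (improper_ge_RInt _ 0 p_infty); simpl; auto; try lra.
    + intros t Ht _. now apply gamma_integrand_cont.
    + intros t _ _. left; apply gamma_integrand_pos.
    + now apply gamma_improper.
Qed.

Lemma poch_S (a : R) (n : nat) : poch a (S n) = poch a n * (a + INR n).
Proof. reflexivity. Qed.

Lemma poch_shift (a : R) (n : nat) : poch a (S n) = a * poch (a + 1) n.
Proof.
  induction n as [|n IH]; [simpl; ring|]. rewrite poch_S, IH, poch_S, S_INR. ring.
Qed.

Lemma poch_pos (a : R) (n : nat) : 0 < a -> 0 < poch a n.
Proof.
  intros Ha. induction n as [|n IH]; simpl; [lra|].
  apply Rmult_lt_0_compat; auto. pose proof (pos_INR n); lra.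
Qed.

Lemma poch_add (a : R) (k j : nat) : poch a (k + j) = poch a k * poch (a + INR k) j.
Proof.
  induction j as [|j IH]; [rewrite Nat.add_0_r; simpl; ring|].
  rewrite Nat.add_succ_r, !poch_S, IH, plus_INR. ring.
Qed.

Lemma poch_succ_base (a : R) (n : nat) : 0 < a -> poch (a + 1) n = poch a n * (a + INR n) / a.
Proof. intros Ha. rewrite <- poch_S, poch_shift. field. lra. Qed.

Lemma poch_abs_bound (a b : R) (n : nat) :
  0 < b -> Rabs (poch a n) <= (1 + Rabs a / b) ^ n * poch b n.
Proof.
  intros Hb.
  assert (Hr : 0 <= Rabs a / b) by (apply Rdiv_le_0_compat; [apply Rabs_pos|lra]).
  set (A := 1 + Rabs a / b).
  assert (HA : 1 <= A) by (unfold A; lra).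
  induction n as [|n IH]; [simpl; rewrite Rabs_R1; lra|].
  rewrite !poch_S, Rabs_mult. simpl pow.
  pose proof (pos_INR n). pose proof (poch_pos b n Hb).
  assert (Hfactor : Rabs (a + INR n) <= A * (b + INR n)).
  { eapply Rle_trans; [apply Rabs_triang|]. rewrite (Rabs_pos_eq (INR n)) by lra.
    assert (0 <= Rabs a / b * INR n) by (apply Rmult_le_pos; lra).
    replace (A * (b + INR n)) with (b + INR n + Rabs a + Rabs a / b * INR n)
      by (unfold A; field; lra).
    lra. }
  assert (0 <= A ^ n) by (apply pow_le; lra).
  apply Rle_trans with (A ^ n * poch b n * Rabs (a + INR n)).
  - apply Rmult_le_compat_r; auto. apply Rabs_pos.
  - replace (A * A ^ n * (poch b n * (b + INR n))) with (A ^ n * poch b n * (A * (b + INR n)))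
      by ring.
    apply Rmult_le_compat_l; auto. apply Rmult_le_pos; lra.
Qed.

(* [Gamma (a+1) = a Gamma a] gives [B(a+1,q) = B(a,q) a/(a+q)], hence
   [B(p+k,q) = B(p,q) (p)_k/(p+q)_k]. *)
Lemma Beta_pos (p q : R) : 0 < p -> 0 < q -> 0 < Beta p q.
Proof.
  intros Hp Hq. unfold Beta.
  apply Rdiv_lt_0_compat; [apply Rmult_lt_0_compat|]; apply Gamma_pos; lra.
Qed.

Lemma Beta_succ (a q : R) : 0 < a -> 0 < q -> Beta (a + 1) q = Beta a q * (a / (a + q)).
Proof.
  intros Ha Hq. unfold Beta.
  replace (a + 1 + q) with ((a + q) + 1) by ring.
  rewrite !Gamma_succ by lra. pose proof (Gamma_pos (a + q)). pose proof (Gamma_pos q).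
  field. repeat split; lra.
Qed.

Lemma Beta_shift (p q : R) (k : nat) : 0 < p -> 0 < q ->
  Beta (p + INR k) q = Beta p q * poch p k / poch (p + q) k.
Proof.
  intros Hp Hq. induction k as [|k IH]; [simpl; rewrite Rplus_0_r; field|].
  rewrite S_INR. replace (p + (INR k + 1)) with ((p + INR k) + 1) by ring.
  pose proof (pos_INR k). pose proof (poch_pos (p + q) k ltac:(lra)).
  rewrite Beta_succ, IH, !poch_S by lra. field. split; lra.
Qed.

(** * The incomplete Beta integral *)

Section IncompleteBeta.

Variables q y : R.
Hypothesis q_pos : 0 < q.
Hypothesis y_range : 0 < y < 1.

Definition beta_integrand (a t : R) : R := Rpower t (a - 1) * Rpower (1 - t) (q - 1).

(* The integration-by-parts boundary term, [t^a (1-t)^q]. *)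
Definition beta_boundary (a t : R) : R := Rpower t a * Rpower (1 - t) q.

(* [J a = int_0^y t^(a-1) (1-t)^(q-1) dt], so that [Ibeta y a q = J a / Beta a q]. *)
Definition J (a : R) : R := the_real (improper_int (beta_integrand a) 0 y).

Lemma beta_integrand_cont (a t : R) : 0 < t < 1 -> continuous (beta_integrand a) t.
Proof.
  intros Ht. apply continuous_mult_R; [apply continuous_Rpower|apply continuous_Rpower_1m]; lra.
Qed.

Lemma beta_integrand_cont_y (a t : R) : 0 < t -> Rbar_lt t y -> continuous (beta_integrand a) t.
Proof. simpl. intros. apply beta_integrand_cont. lra. Qed.

Lemma beta_integrand_nonneg (a t : R) : 0 <= beta_integrand a t.
Proof. left. apply Rmult_lt_0_compat; apply Rpower_pos. Qed.

Lemma beta_boundary_pos (a : R) : 0 < beta_boundary a y.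
Proof. apply Rmult_lt_0_compat; apply Rpower_pos. Qed.

Lemma beta_boundary_shift (a : R) (k : nat) : beta_boundary (a + INR k) y = y ^ k * beta_boundary a y.
Proof. unfold beta_boundary. rewrite Rpower_plus, Rpower_pow by lra. ring. Qed.

Lemma one_minus_Rpower_bound (t : R) : 0 < t < y ->
  Rpower (1 - t) (q - 1) <= Rmax 1 (Rpower (1 - y) (q - 1)).
Proof.
  intros Ht. destruct (Rle_dec 0 (q - 1)).
  - apply Rle_trans with 1; [apply Rpower_le_1; lra|apply Rmax_l].
  - apply Rle_trans with (Rpower (1 - y) (q - 1)); [|apply Rmax_r].
    replace (q - 1) with (- (1 - q)) by ring. rewrite !Rpower_Ropp.
    apply Rinv_le_contravar; [apply Rpower_pos|apply Rle_Rpower_l; lra].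
Qed.

Lemma RInt_Rpower (a u v : R) : 0 < a -> 0 < u -> 0 < v ->
  RInt (fun t => Rpower t (a - 1)) u v = Rpower v a / a - Rpower u a / a.
Proof.
  intros Ha Hu Hv. assert (0 < Rmin u v) by now apply Rmin_glb_lt.
  apply (RInt_antiderivative _ (fun t => Rpower t a / a)); intros x Hx.
  - replace (Rpower x (a - 1)) with (/ a * (a * Rpower x (a - 1))) by (field; lra).
    apply (is_derive_ext (fun t => / a * Rpower t a)); [intros; simpl; unfold Rdiv; ring|].
    apply (is_derive_scal (fun t => Rpower t a)), is_derive_Rpower. lra.
  - apply continuous_Rpower. lra.
Qed.

(* Comparison with [C t^(a-1)] shows that [J a] converges for [a > 0]. *)
Lemma beta_improper (a : R) : 0 < a -> improper (beta_integrand a) 0 y (J a).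
Proof.
  intros Ha. set (C := Rmax 1 (Rpower (1 - y) (q - 1))).
  assert (HC : 1 <= C) by apply Rmax_l.
  assert (Hpow : forall u v, 0 < u -> u <= v -> ex_RInt (fun t => Rpower t (a - 1)) u v).
  { intros u v Hu Huv. apply (@ex_RInt_continuous R_CompleteNormedModule). intros t Ht.
    rewrite Rmin_left in Ht by lra. apply continuous_Rpower. lra. }
  assert (Hex : exists L, improper (beta_integrand a) 0 y L).
  { apply (improper_exists_nonneg _ 0 y (beta_integrand_cont_y a) (C / a)); simpl; try lra.
    - intros t _ _. apply beta_integrand_nonneg.
    - intros u v Hu Huv Hvy.
      apply Rle_trans with (RInt (fun t => C * Rpower t (a - 1)) u v).
      + apply RInt_le; auto.
        * apply (ex_RInt_open _ 0 y (beta_integrand_cont_y a)); simpl; lra.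
        * apply ex_RInt_scal_R. auto.
        * intros t Ht. unfold beta_integrand. rewrite (Rmult_comm C).
          apply Rmult_le_compat_l; [left; apply Rpower_pos|].
          apply one_minus_Rpower_bound. lra.
      + rewrite RInt_scal_R, RInt_Rpower by (auto; lra).
        assert (Rpower v a <= 1) by (apply Rpower_le_1; lra).
        pose proof (Rpower_pos u a).
        apply Rmult_le_reg_r with a; auto. unfold Rdiv.
        replace (C * (Rpower v a * / a - Rpower u a * / a) * a)
          with (C * (Rpower v a - Rpower u a)) by (field; lra).
        replace (C * / a * a) with C by (field; lra). nra. }
  destruct Hex as [L HL]. unfold J. now rewrite (improper_int_value _ 0 y L ltac:(lra) HL).
Qed.

Lemma J_nonneg (a : R) : 0 < a -> 0 <= J a.
Proof.
  intros Ha. apply (improper_le (fun _ => 0) (beta_integrand a) 0 y); simpl; try lra.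
  - intros eps He. exists (y / 2). split; [lra|]. intros u v Hu Hv. split; [apply ex_RInt_const|].
    rewrite RInt_const. unfold scal; simpl; unfold mult; simpl.
    rewrite Rmult_0_r, Rminus_0_r, Rabs_R0. auto.
  - now apply beta_improper.
  - intros; apply beta_integrand_nonneg.
Qed.

(* Since [t <= y] on the domain, raising [a] by [n] costs at least a factor [y^n]. *)
Lemma J_shift_le (a : R) (n : nat) : 0 < a -> J (a + INR n) <= y ^ n * J a.
Proof.
  intros Ha. pose proof (pos_INR n).
  apply (improper_le (beta_integrand (a + INR n)) (fun t => y ^ n * beta_integrand a t) 0 y);
    simpl; try lra.
  - apply beta_improper. lra.
  - apply improper_scal, beta_improper. lra.
  - intros t Ht Hty. unfold beta_integrand.
    replace (a + INR n - 1) with ((a - 1) + INR n) by ring.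
    rewrite Rpower_plus, Rpower_pow by lra.
    pose proof (Rpower_pos t (a - 1)). pose proof (Rpower_pos (1 - t) (q - 1)).
    assert (t ^ n <= y ^ n) by (apply pow_incr; lra).
    assert (0 <= Rpower t (a - 1) * Rpower (1 - t) (q - 1)) by (apply Rmult_le_pos; lra).
    nra.
Qed.

(* [(t^a (1-t)^q)' = a t^(a-1) (1-t)^(q-1) - (a+q) t^a (1-t)^(q-1)], integrated. *)
Lemma beta_by_parts (a u v : R) : 0 < u < 1 -> 0 < v < 1 ->
  a * RInt (beta_integrand a) u v + (- (a + q)) * RInt (beta_integrand (a + 1)) u v
  = beta_boundary a v - beta_boundary a u.
Proof.
  intros Hu Hv.
  assert (Hin : forall x, Rmin u v <= x <= Rmax u v -> 0 < x < 1).
  { intros x Hx. assert (0 < Rmin u v) by (apply Rmin_glb_lt; lra).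
    assert (Rmax u v < 1) by (apply Rmax_lub_lt; lra). lra. }
  apply RInt_combination; intros x Hx; specialize (Hin x Hx).
  - unfold beta_boundary, beta_integrand. replace (a + 1 - 1) with a by ring.
    replace (a * (Rpower x (a - 1) * Rpower (1 - x) (q - 1))
             + - (a + q) * (Rpower x a * Rpower (1 - x) (q - 1)))
      with (a * Rpower x (a - 1) * Rpower (1 - x) q + Rpower x a * (- q * Rpower (1 - x) (q - 1)))
      by (rewrite (Rpower_succ x a), (Rpower_succ (1 - x) q) by lra; ring).
    apply (is_derive_mult (fun t => Rpower t a) (fun t => Rpower (1 - t) q)).
    + apply is_derive_Rpower. lra.
    + apply is_derive_Rpower_1m. lra.
    + intros; apply Rmult_comm.
  - split; now apply beta_integrand_cont.
Qed.

Lemma J_rec (a : R) : 0 < a -> a * J a - (a + q) * J (a + 1) = beta_boundary a y.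
Proof.
  intros Ha.
  replace (beta_boundary a y) with (beta_boundary a y - 0) by ring.
  replace (a * J a - (a + q) * J (a + 1)) with (a * J a + (- (a + q)) * J (a + 1)) by ring.
  apply (improper_identity (beta_integrand a) (beta_integrand (a + 1)) (beta_boundary a) 0 y);
    simpl; try lra.
  - now apply beta_improper.
  - apply beta_improper. lra.
  - apply beta_integrand_cont_y.
  - intros u v Hu Huv Hvy. apply beta_by_parts; lra.
  - apply lim_lower_0 with a; auto. intros u Hu. unfold beta_boundary.
    pose proof (Rpower_pos u a). pose proof (Rpower_pos (1 - u) q).
    assert (Rpower (1 - u) q <= 1) by (apply Rpower_le_1; lra). split; nra.
  - intros eps He.
    assert (Hc : continuous (beta_boundary a) y).
    { apply continuous_mult_R; [apply continuous_Rpower|apply continuous_Rpower_1m]; lra. }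
    destruct (proj1 (filterlim_locally _ _) Hc (mkposreal eps He)) as [d Hd].
    exists d. split; [apply cond_pos|]. simpl. intros v Hv. apply (Hd v).
    change (Rabs (v - y) < d). apply Rabs_def1; lra.
Qed.

Lemma J_unrolled (a : R) (n : nat) : 0 < a ->
  J a = beta_boundary a y / a * sum_f_R0 (fun j => poch (a + q) j / poch (a + 1) j * y ^ j) n
        + poch (a + q) (S n) / poch a (S n) * J (a + INR (S n)).
Proof.
  intros Ha. pose proof (J_rec a Ha) as Ja. pose proof (beta_boundary_pos a).
  induction n as [|n IH].
  - simpl. replace (a + 0) with a by ring. rewrite <- Ja. field. lra.
  - rewrite IH at 1. set (b := a + INR (S n)).
    assert (Hb : 0 < b) by (unfold b; pose proof (pos_INR (S n)); lra).
    assert (Jb : J b = beta_boundary b y / b + (b + q) / b * J (b + 1)).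
    { rewrite <- (J_rec b Hb). field. lra. }
    rewrite Jb, tech5.
    replace (a + INR (S (S n))) with (b + 1) by (unfold b; rewrite (S_INR (S n)); ring).
    unfold b. rewrite beta_boundary_shift. fold b.
    pose proof (poch_pos a (S n) Ha). pose proof (poch_pos (a + 1) (S n) ltac:(lra)).
    rewrite (poch_S (a + q) (S n)), (poch_S a (S n)). fold b.
    rewrite (poch_succ_base a (S n) Ha). fold b.
    replace (a + q + INR (S n)) with (b + q) by (unfold b; ring).
    field. repeat split; lra.
Qed.

(* The remainder factor tends to 0, by d'Alembert's ratio test (ratio -> y < 1). *)
Lemma poch_ratio_geometric_lim (a : R) : 0 < a ->
  is_lim_seq (fun n => poch (a + q) n / poch a n * y ^ n) 0.
Proof.
  intros Ha.
  assert (Hterm : forall n, 0 < poch (a + q) n / poch a n * y ^ n).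
  { intros n. apply Rmult_lt_0_compat; [apply Rdiv_lt_0_compat|apply pow_lt];
      try apply poch_pos; lra. }
  apply ex_series_lim_0.
  apply (@ex_series_le R_AbsRing R_CompleteNormedModule _
           (fun n => Rabs (poch (a + q) n / poch a n * y ^ n))); [intros n; apply Rle_refl|].
  apply (ex_series_DAlembert _ y); [lra|intros n; apply Rgt_not_eq, Hterm|].
  apply (is_lim_seq_ext (fun n => (1 + q * / (a + INR n)) * y)).
  - intros n. pose proof (poch_pos (a + q) n ltac:(lra)). pose proof (poch_pos a n Ha).
    pose proof (pow_lt y n ltac:(lra)). pose proof (pos_INR n).
    assert (0 < / (a + INR n)) by (apply Rinv_0_lt_compat; lra).
    assert (E : poch (a + q) (S n) / poch a (S n) * y ^ S n / (poch (a + q) n / poch a n * y ^ n)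
                = (1 + q * / (a + INR n)) * y) by (rewrite !poch_S; simpl pow; field; repeat split; lra).
    rewrite E, Rabs_pos_eq; [reflexivity|]. apply Rmult_le_pos; [|lra].
    assert (0 <= q * / (a + INR n)) by (apply Rmult_le_pos; lra). lra.
  - replace (Finite y) with (Finite ((1 + q * 0) * y)) by (f_equal; ring).
    apply is_lim_seq_mult'; [|apply is_lim_seq_const].
    apply is_lim_seq_plus'; [apply is_lim_seq_const|].
    apply is_lim_seq_mult'; [apply is_lim_seq_const|].
    apply (is_lim_seq_inv _ p_infty); [|discriminate].
    eapply is_lim_seq_plus; [apply is_lim_seq_const|apply is_lim_seq_INR|reflexivity].
Qed.

Lemma J_series (a : R) : 0 < a ->
  infinite_sum (fun j => poch (a + q) j / poch (a + 1) j * y ^ j) (a * J a / beta_boundary a y).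
Proof.
  intros Ha. apply infinite_sum_lim. pose proof (beta_boundary_pos a) as Hphi.
  set (rem := fun n => poch (a + q) (S n) / poch a (S n) * J (a + INR (S n))).
  assert (Hrem : is_lim_seq rem 0).
  { apply (is_lim_seq_le_le (fun _ => 0) rem
      (fun n => poch (a + q) (S n) / poch a (S n) * y ^ (S n) * J a)).
    - intros n. unfold rem. pose proof (pos_INR (S n)).
      assert (0 < poch (a + q) (S n) / poch a (S n))
        by (apply Rdiv_lt_0_compat; apply poch_pos; lra).
      pose proof (J_nonneg (a + INR (S n)) ltac:(lra)). pose proof (J_shift_le a (S n) Ha).
      split; [apply Rmult_le_pos; lra|]. rewrite Rmult_assoc. apply Rmult_le_compat_l; lra.
    - apply is_lim_seq_const.
    - replace (Finite 0) with (Finite (0 * J a)) by (f_equal; ring).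
      apply is_lim_seq_mult'; [|apply is_lim_seq_const].
      apply (is_lim_seq_incr_1 (fun n => poch (a + q) n / poch a n * y ^ n)).
      now apply poch_ratio_geometric_lim. }
  apply (is_lim_seq_ext (fun n => a / beta_boundary a y * (J a - rem n))).
  - intros n. rewrite (J_unrolled a n Ha) at 1. unfold rem.
    pose proof (poch_pos a (S n) Ha). field. repeat split; lra.
  - replace (Finite (a * J a / beta_boundary a y))
      with (Finite (a / beta_boundary a y * (J a - 0))) by (f_equal; field; lra).
    apply is_lim_seq_mult'; [apply is_lim_seq_const|].
    apply is_lim_seq_minus'; [apply is_lim_seq_const|exact Hrem].
Qed.

End IncompleteBeta.

(** * Kummer's function as an entire power series *)

Lemma CV_radius_infinite (c : nat -> R) (K : R) : 0 <= K ->
  (forall r n, Rabs (c n * r ^ n) <= (K * Rabs r) ^ n / INR (fact n)) ->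
  forall x, Rbar_lt (Rabs x) (CV_radius c).
Proof.
  intros HK Hb x. destruct (CV_radius_bounded c) as [Hub _].
  assert (HE : Rbar_le (Rabs x + 1) (CV_radius c)).
  { apply Hub. exists (exp (K * Rabs (Rabs x + 1))). intros n.
    eapply Rle_trans; [apply Hb|]. apply exp_term_le, Rmult_le_pos; auto. apply Rabs_pos. }
  destruct (CV_radius c) as [r| |]; simpl in *; auto. lra.
Qed.

(* Taylor coefficients of [M(a,b,.)]; bounded by those of [exp ((1+|a|/b) x)]. *)
Definition kummer_coef (a b : R) (n : nat) : R := poch a n / poch b n / INR (fact n).

Lemma kummer_radius (a b x : R) : 0 < b -> Rbar_lt (Rabs x) (CV_radius (kummer_coef a b)).
Proof.
  intros Hb. assert (Hr : 0 <= Rabs a / b) by (apply Rdiv_le_0_compat; [apply Rabs_pos|lra]).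
  apply (CV_radius_infinite _ (1 + Rabs a / b)); [lra|]. intros r n.
  unfold kummer_coef. pose proof (poch_pos b n Hb). pose proof (INR_fact_lt_0 n).
  pose proof (poch_abs_bound a b n Hb).
  rewrite Rpow_mult_distr, RPow_abs, !Rabs_mult. unfold Rdiv.
  rewrite !Rabs_mult, !Rabs_inv, (Rabs_pos_eq (poch b n)), (Rabs_pos_eq (INR (fact n))) by lra.
  assert (Hratio : Rabs (poch a n) * / poch b n <= (1 + Rabs a * / b) ^ n).
  { apply Rmult_le_reg_r with (poch b n); auto. rewrite Rmult_assoc, Rinv_l by lra. lra. }
  assert (0 <= Rabs (r ^ n) * / INR (fact n))
    by (apply Rmult_le_pos; [apply Rabs_pos|left; apply Rinv_0_lt_compat; lra]).
  replace (Rabs (poch a n) * / poch b n * / INR (fact n) * Rabs (r ^ n))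
    with ((Rabs (poch a n) * / poch b n) * (Rabs (r ^ n) * / INR (fact n))) by ring.
  replace ((1 + Rabs a * / b) ^ n * Rabs (r ^ n) * / INR (fact n))
    with ((1 + Rabs a * / b) ^ n * (Rabs (r ^ n) * / INR (fact n))) by ring.
  apply Rmult_le_compat_r; auto.
Qed.

Lemma kummer_is_pseries (a b z : R) : 0 < b ->
  is_pseries (kummer_coef a b) z (PSeries (kummer_coef a b) z).
Proof. intros Hb. apply PSeries_correct, CV_radius_inside, kummer_radius, Hb. Qed.

Lemma kummer_sum (a b z : R) : 0 < b ->
  infinite_sum (fun n => poch a n / poch b n * z ^ n / INR (fact n)) (PSeries (kummer_coef a b) z).
Proof.
  intros Hb. apply is_series_Reals. eapply is_series_ext; [|exact (kummer_is_pseries a b z Hb)].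
  intros n. simpl. rewrite pow_n_pow. unfold scal; simpl; unfold mult; simpl.
  unfold kummer_coef, Rdiv. ring.
Qed.

Lemma kummer_pseries (a b z : R) : 0 < b -> kummerM a b z = PSeries (kummer_coef a b) z.
Proof. intros Hb. apply series_eq, kummer_sum, Hb. Qed.

Lemma kummer_deriv (a b z : R) : 0 < b ->
  is_derive (kummerM a b) z (a / b * kummerM (a + 1) (b + 1) z).
Proof.
  intros Hb.
  apply (is_derive_ext (PSeries (kummer_coef a b))); [intros t; now rewrite kummer_pseries|].
  rewrite kummer_pseries by lra.
  replace (a / b * PSeries (kummer_coef (a + 1) (b + 1)) z)
    with (PSeries (PS_derive (kummer_coef a b)) z).
  - apply is_derive_PSeries, kummer_radius, Hb.
  - rewrite <- PSeries_scal. apply PSeries_ext. intros n. unfold PS_derive, PS_scal.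
    change (scal (a / b) (kummer_coef (a + 1) (b + 1) n))
      with ((a / b) * kummer_coef (a + 1) (b + 1) n).
    unfold kummer_coef. rewrite !poch_shift.
    change (fact (S n)) with (S n * fact n)%nat. rewrite mult_INR.
    pose proof (poch_pos (b + 1) n ltac:(lra)). pose proof (INR_fact_lt_0 n).
    pose proof (pos_INR n). rewrite S_INR. field. repeat split; lra.
Qed.

(** * Kummer's transformation [M(b-a,b,-z) = e^(-z) M(a,b,z)] *)

Lemma binomial_n_0 (n : nat) : Binomial.C n 0 = 1.
Proof. unfold Binomial.C. rewrite Nat.sub_0_r. simpl. field. apply INR_fact_neq_0. Qed.

Lemma binomial_n_n (n : nat) : Binomial.C n n = 1.
Proof. unfold Binomial.C. rewrite Nat.sub_diag. simpl. field. apply INR_fact_neq_0. Qed.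

Lemma binomial_sum_S (f : nat -> R) (N : nat) :
  sum_f_R0 (fun k => Binomial.C (S N) k * f k) (S N) =
  sum_f_R0 (fun k => Binomial.C N k * f k) N + sum_f_R0 (fun k => Binomial.C N k * f (S k)) N.
Proof.
  destruct N as [|m]; [simpl; rewrite binomial_n_0, !binomial_n_n; ring|].
  rewrite (decomp_sum (fun k => Binomial.C (S (S m)) k * f k) (S (S m))) by lia.
  rewrite (decomp_sum (fun k => Binomial.C (S m) k * f k) (S m)) by lia.
  simpl pred. rewrite tech5, (tech5 (fun k => Binomial.C (S m) k * f (S k))).
  rewrite !binomial_n_0, !binomial_n_n.
  rewrite (sum_eq (fun i => Binomial.C (S (S m)) (S i) * f (S i))
             (fun i => Binomial.C (S m) i * f (S i) + Binomial.C (S m) (S i) * f (S i))).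
  - rewrite plus_sum. ring.
  - intros i Hi. rewrite <- pascal by lia. ring.
Qed.

Definition alt_poch_ratio (a b : R) (k : nat) : R := (-1) ^ k * (poch a k / poch b k).

Lemma chu_vandermonde (n : nat) : forall a b, 0 < b ->
  sum_f_R0 (fun k => Binomial.C n k * alt_poch_ratio a b k) n = poch (b - a) n / poch b n.
Proof.
  induction n as [|n IH]; intros a b Hb.
  - simpl. rewrite binomial_n_0. unfold alt_poch_ratio. simpl. field.
  - rewrite binomial_sum_S.
    rewrite (sum_eq (fun k => Binomial.C n k * alt_poch_ratio a b (S k))
               (fun k => Binomial.C n k * alt_poch_ratio (a + 1) (b + 1) k * (- (a / b)))).
    2:{ intros i _. unfold alt_poch_ratio. rewrite !poch_shift. simpl pow.
        pose proof (poch_pos (b + 1) i ltac:(lra)). field. split; lra. }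
    rewrite <- scal_sum, !IH by lra.
    replace (b + 1 - (a + 1)) with (b - a) by ring.
    pose proof (poch_pos b n Hb). pose proof (pos_INR n).
    rewrite (poch_succ_base b n Hb).
    rewrite !poch_S. field. repeat split; lra.
Qed.

Definition exp_opp_coef (n : nat) : R := (-1) ^ n / INR (fact n).

Lemma exp_opp_pseries (z : R) : is_pseries exp_opp_coef z (exp (- z)).
Proof.
  eapply is_series_ext; [|exact (is_exp_Reals (- z))]. intros n.
  rewrite !pow_n_pow. unfold scal; simpl; unfold mult; simpl. unfold exp_opp_coef.
  replace (- z) with (-1 * z) by ring. rewrite Rpow_mult_distr. unfold Rdiv. ring.
Qed.

Lemma exp_opp_radius (x : R) : Rbar_lt (Rabs x) (CV_radius exp_opp_coef).
Proof.
  apply (CV_radius_infinite _ 1); [lra|]. intros r n. unfold exp_opp_coef.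
  rewrite Rmult_1_l, Rabs_mult. unfold Rdiv. rewrite Rabs_mult, Rabs_inv, pow_1_abs.
  rewrite (Rabs_pos_eq (INR (fact n))) by (left; apply INR_fact_lt_0). rewrite RPow_abs. lra.
Qed.

Lemma pow_m1_sub (n k : nat) : (k <= n)%nat -> (-1) ^ (n - k) = (-1) ^ n * (-1) ^ k.
Proof.
  intros Hk. replace ((-1) ^ n) with ((-1) ^ (n - k) * (-1) ^ k) by (rewrite <- pow_add; f_equal; lia).
  rewrite Rmult_assoc, <- Rpow_mult_distr. replace (-1 * -1) with 1 by ring. rewrite pow1. ring.
Qed.

(* The Cauchy product of the series of [M(a,b,z)] and [e^(-z)] has the
   coefficients of [M(b-a,b,-z)]: this is Chu-Vandermonde. *)
Lemma kummer_cauchy_product (a b : R) (n : nat) : 0 < b ->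
  PS_mult (kummer_coef a b) exp_opp_coef n = (-1) ^ n * kummer_coef (b - a) b n.
Proof.
  intros Hb. unfold PS_mult.
  rewrite (sum_eq _ (fun k => Binomial.C n k * alt_poch_ratio a b k * ((-1) ^ n / INR (fact n)))).
  - rewrite <- scal_sum, chu_vandermonde by auto. unfold kummer_coef.
    pose proof (poch_pos b n Hb). pose proof (INR_fact_lt_0 n). field. split; lra.
  - intros k Hk. unfold kummer_coef, exp_opp_coef, alt_poch_ratio, Binomial.C.
    rewrite pow_m1_sub by auto.
    pose proof (poch_pos b k Hb). pose proof (INR_fact_lt_0 n). pose proof (INR_fact_lt_0 k).
    pose proof (INR_fact_lt_0 (n - k)).
    replace ((-1) ^ k * (-1) ^ k) with 1
      by (rewrite <- Rpow_mult_distr; replace (-1 * -1) with 1 by ring; now rewrite pow1).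
    field. repeat split; lra.
Qed.

(* Kummer's transformation, by uniqueness of the sum of the Cauchy product. *)
Lemma kummer_transform (a b z : R) : 0 < b -> kummerM (b - a) b (- z) = exp (- z) * kummerM a b z.
Proof.
  intros Hb. rewrite !kummer_pseries by auto. rewrite Rmult_comm.
  apply is_pseries_unique.
  assert (H := is_pseries_mult _ _ z _ _ (kummer_is_pseries a b z Hb) (exp_opp_pseries z)
                 (kummer_radius a b z Hb) (exp_opp_radius z)).
  eapply is_series_ext; [|exact H]. intros n.
  rewrite !pow_n_pow. unfold scal; simpl; unfold mult; simpl.
  rewrite kummer_cauchy_product by auto.
  replace (- z) with (-1 * z) by ring. rewrite Rpow_mult_distr. ring.
Qed.

Lemma Ibeta_J (y a q : R) : 0 < y -> Ibeta y a q = J q y a / Beta a q.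
Proof. intros Hy. unfold Ibeta. destruct (Rle_dec y 0); [lra|reflexivity]. Qed.

(** * The double series behind the first expansion *)

Section DoubleSeries.

Variables p q x y : R.
Hypothesis p_pos : 0 < p.
Hypothesis q_pos : 0 < q.
Hypothesis x_nonneg : 0 <= x.
Hypothesis y_range : 0 < y < 1.

Let z : R := x * y / 2.

Lemma z_nonneg : 0 <= z.
Proof. unfold z. apply Rmult_le_pos; [apply Rmult_le_pos|]; lra. Qed.

(* Summing over [j] first gives
   the series of [B_(p,q)(x,y)] (via [J_series]); summing over [k] first gives the
   first expansion (via the Kummer series). *)
Definition double_term (k j : nat) : R :=
  z ^ k / INR (fact k) * y ^ j * (poch (p + q) (k + j) / poch (p + 1) (k + j)).

(* The sum of row [k], computed by [J_series] at [a = p + k]. *)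
Definition row_value (k : nat) : R :=
  z ^ k / INR (fact k) * (poch (p + q) k / poch (p + 1) k)
  * ((p + INR k) * J q y (p + INR k) / beta_boundary q (p + INR k) y).

Lemma double_term_nonneg (k j : nat) : 0 <= double_term k j.
Proof.
  unfold double_term. pose proof z_nonneg. pose proof (INR_fact_lt_0 k).
  pose proof (poch_pos (p + q) (k + j) ltac:(lra)). pose proof (poch_pos (p + 1) (k + j) ltac:(lra)).
  apply Rmult_le_pos; [apply Rmult_le_pos|left; apply Rdiv_lt_0_compat; lra].
  - apply Rdiv_le_0_compat; [apply pow_le|]; lra.
  - apply pow_le; lra.
Qed.

Lemma row_sum (k : nat) : infinite_sum (double_term k) (row_value k).
Proof.
  pose proof (pos_INR k).
  assert (HS := J_series q y q_pos y_range (p + INR k) ltac:(lra)).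
  apply (infinite_sum_scal _ _ (z ^ k / INR (fact k) * (poch (p + q) k / poch (p + 1) k))) in HS.
  eapply infinite_sum_ext; [|exact HS]. intros j. unfold double_term.
  rewrite !poch_add.
  replace (p + INR k + q) with (p + q + INR k) by ring.
  replace (p + INR k + 1) with (p + 1 + INR k) by ring.
  pose proof (poch_pos (p + 1) k ltac:(lra)). pose proof (poch_pos (p + 1 + INR k) j ltac:(lra)).
  pose proof (INR_fact_lt_0 k). field. repeat split; lra.
Qed.

Lemma row_value_nonneg (k : nat) : 0 <= row_value k.
Proof.
  apply Rle_trans with (double_term k O); [apply double_term_nonneg|].
  apply (term_le_sum (double_term k)); [apply double_term_nonneg|apply row_sum].
Qed.

(* [row_value k <= C (A z)^k / k!] with [A = 1 + (p+q)/p], from [J (p+k) <= y^k J p]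
   and the geometric bound on Pochhammer ratios. *)
Lemma row_value_bound (k : nat) :
  row_value k <= p * J q y p / beta_boundary q p y * ((1 + Rabs (p + q) / p) * z) ^ k / INR (fact k).
Proof.
  unfold row_value. pose proof (pos_INR k). pose proof z_nonneg as Hz.
  set (A := 1 + Rabs (p + q) / p).
  pose proof (INR_fact_lt_0 k). pose proof (poch_pos p k p_pos).
  pose proof (poch_pos (p + 1) k ltac:(lra)). pose proof (poch_pos (p + q) k ltac:(lra)).
  pose proof (beta_boundary_pos q y p). pose proof (pow_lt y k ltac:(lra)).
  rewrite beta_boundary_shift by exact y_range.
  assert (HJ := J_shift_le q y y_range p k p_pos).
  assert (HJ0 := J_nonneg q y y_range (p + INR k) ltac:(lra)).
  assert (Hpa := poch_abs_bound (p + q) p k p_pos).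
  rewrite Rabs_pos_eq in Hpa by lra. fold A in Hpa.
  rewrite (poch_succ_base p k p_pos).
  rewrite Rpow_mult_distr.
  assert (Hr : poch (p + q) k / poch p k <= A ^ k).
  { apply Rmult_le_reg_r with (poch p k); auto. unfold Rdiv.
    rewrite Rmult_assoc, Rinv_l by lra. lra. }
  assert (Hj : J q y (p + INR k) / y ^ k <= J q y p).
  { apply Rmult_le_reg_r with (y ^ k); auto. unfold Rdiv.
    rewrite Rmult_assoc, Rinv_l by lra. lra. }
  assert (Hz0 : 0 <= z ^ k / INR (fact k)) by (apply Rdiv_le_0_compat; auto; apply pow_le; auto).
  assert (Hpp : 0 < p / beta_boundary q p y) by (apply Rdiv_lt_0_compat; auto).
  assert (0 <= J q y (p + INR k) / y ^ k) by (apply Rdiv_le_0_compat; auto).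
  assert (0 <= poch (p + q) k / poch p k) by (left; apply Rdiv_lt_0_compat; auto).
  replace (z ^ k / INR (fact k) * (poch (p + q) k / (poch p k * (p + INR k) / p)) *
           ((p + INR k) * J q y (p + INR k) / (y ^ k * beta_boundary q p y)))
    with (z ^ k / INR (fact k) * (poch (p + q) k / poch p k) * (p / beta_boundary q p y)
          * (J q y (p + INR k) / y ^ k)) by (field; repeat split; lra).
  replace (p * J q y p / beta_boundary q p y * (A ^ k * z ^ k) / INR (fact k))
    with (z ^ k / INR (fact k) * A ^ k * (p / beta_boundary q p y) * J q y p)
    by (field; repeat split; lra).
  apply Rmult_le_compat; try lra.
  - apply Rmult_le_pos; [apply Rmult_le_pos|]; lra.
  - apply Rmult_le_compat_r; [lra|]. apply Rmult_le_compat_l; lra.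
Qed.

(* The row sums are dominated by an exponential series, hence summable. *)
Lemma rows_summable : exists L, infinite_sum row_value L.
Proof.
  pose proof z_nonneg as Hz.
  set (C := p * J q y p / beta_boundary q p y). set (A := 1 + Rabs (p + q) / p).
  assert (HC : 0 <= C).
  { apply Rdiv_le_0_compat; [apply Rmult_le_pos; [lra|apply J_nonneg; auto]|].
    apply beta_boundary_pos. }
  assert (HA : 0 <= A * z).
  { apply Rmult_le_pos; auto.
    assert (0 <= Rabs (p + q) / p) by (apply Rdiv_le_0_compat; [apply Rabs_pos|lra]).
    unfold A; lra. }
  destruct (bounded_partial_sums row_value row_value_nonneg (C * exp (A * z))) as [L [HL _]].
  - intros n. apply Rle_trans with (sum_f_R0 (fun k => C * ((A * z) ^ k / INR (fact k))) n).
    + apply sum_Rle. intros k _. eapply Rle_trans; [apply row_value_bound|].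
      fold C A. unfold Rdiv. lra.
    + rewrite (sum_eq _ (fun k => (A * z) ^ k / INR (fact k) * C)) by (intros; ring).
      rewrite <- scal_sum. apply Rmult_le_compat_l; auto.
      apply (partial_sum_le (fun k => (A * z) ^ k / INR (fact k))); [|apply exp_series].
      intros k. apply Rdiv_le_0_compat; [apply pow_le; auto|apply INR_fact_lt_0].
  - exists L. exact HL.
Qed.

Lemma column_sum_kummer (j : nat) :
  infinite_sum (fun k => double_term k j)
    (y ^ j * (poch (p + q) j / poch (p + 1) j) * kummerM (p + q + INR j) (p + 1 + INR j) z).
Proof.
  pose proof (pos_INR j).
  assert (HS := kummer_sum (p + q + INR j) (p + 1 + INR j) z ltac:(lra)).
  rewrite <- kummer_pseries in HS by lra.
  apply (infinite_sum_scal _ _ (y ^ j * (poch (p + q) j / poch (p + 1) j))) in HS.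
  eapply infinite_sum_ext; [|exact HS]. intros k. unfold double_term.
  rewrite (Nat.add_comm k j), !poch_add.
  pose proof (poch_pos (p + 1) j ltac:(lra)). pose proof (poch_pos (p + 1 + INR j) k ltac:(lra)).
  pose proof (INR_fact_lt_0 k). field. repeat split; lra.
Qed.

Lemma ncbeta_term_row (k : nat) :
  / INR (fact k) * (x / 2) ^ k * Ibeta y (p + INR k) q
  = beta_boundary q p y / (p * Beta p q) * row_value k.
Proof.
  rewrite Ibeta_J by lra. unfold row_value.
  rewrite Beta_shift, beta_boundary_shift by lra.
  unfold z. replace (x * y / 2) with (x / 2 * y) by field. rewrite Rpow_mult_distr.
  pose proof (pos_INR k). pose proof (INR_fact_lt_0 k). pose proof (poch_pos p k p_pos).
  pose proof (poch_pos (p + 1) k ltac:(lra)). pose proof (poch_pos (p + q) k ltac:(lra)).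
  pose proof (Beta_pos p q p_pos q_pos). pose proof (pow_lt y k ltac:(lra)).
  pose proof (beta_boundary_pos q y p).
  rewrite (poch_succ_base p k p_pos).
  field. repeat split; lra.
Qed.

(* The first expansion for [0 < y < 1], by Tonelli on [double_term]. *)
Lemma first_expansion_pos :
  (exists L, infinite_sum (fun j => / INR (fact j) * (x / 2) ^ j * Ibeta y (p + INR j) q) L) /\
  exists S, infinite_sum
     (fun j => y ^ j * (poch (p + q) j / poch (p + 1) j)
               * kummerM (p + q + INR j) (p + 1 + INR j) z) S /\
   ncbeta p q x y = exp (- x / 2) * (beta_boundary q p y / (p * Beta p q)) * S.
Proof.
  destruct rows_summable as [L HL].
  set (K := beta_boundary q p y / (p * Beta p q)).
  assert (Hterms : infinite_sum (fun j => / INR (fact j) * (x / 2) ^ j * Ibeta y (p + INR j) q)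
                     (K * L)).
  { apply (infinite_sum_scal _ _ K) in HL. eapply infinite_sum_ext; [|exact HL].
    intros j. symmetry. apply ncbeta_term_row. }
  split; [exists (K * L); exact Hterms|]. exists L. split.
  - eapply infinite_sum_ext; [|exact (tonelli double_term row_value L double_term_nonneg row_sum HL)].
    intros j. apply series_eq, column_sum_kummer.
  - unfold ncbeta. rewrite (series_eq _ _ Hterms). ring.
Qed.

End DoubleSeries.

(* At [y = 0] everything vanishes; for [0 < y < 1] this is [first_expansion_pos]. *)
Lemma first_expansion (p q x y : R) : 0 < p -> 0 < q -> 0 <= x -> 0 <= y < 1 ->
  (exists L, infinite_sum (fun j => / INR (fact j) * (x / 2) ^ j * Ibeta y (p + INR j) q) L) /\
  exists S, infinite_sum
     (fun j => y ^ j * (poch (p + q) j / poch (p + 1) j)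
               * kummerM (p + q + INR j) (p + 1 + INR j) (x * y / 2)) S /\
   ncbeta p q x y = exp (- x / 2) * (rpow y p * rpow (1 - y) q / (p * Beta p q)) * S.
Proof.
  intros Hp Hq Hx [Hy0 Hy1]. destruct (Req_dec y 0) as [->|Hy].
  - assert (Hzero : forall j, / INR (fact j) * (x / 2) ^ j * Ibeta 0 (p + INR j) q = 0).
    { intros j. unfold Ibeta. destruct (Rle_dec 0 0); [ring|lra]. }
    assert (Hsum := infinite_sum_first
                      (fun j => / INR (fact j) * (x / 2) ^ j * Ibeta 0 (p + INR j) q)
                      (fun n => Hzero (S n))).
    cbv beta in Hsum. rewrite Hzero in Hsum.
    split; [now exists 0|]. eexists. split.
    + apply infinite_sum_first. intros n. simpl. ring.
    + unfold ncbeta, rpow. rewrite (series_eq _ _ Hsum).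
      destruct (Rle_dec 0 0); [|lra]. unfold Rdiv. ring.
  - replace (rpow y p * rpow (1 - y) q) with (beta_boundary q p y).
    + apply first_expansion_pos; auto; lra.
    + unfold rpow, beta_boundary. destruct (Rle_dec y 0); [lra|]. destruct (Rle_dec (1 - y) 0); [lra|].
      reflexivity.
Qed.

Lemma second_series_of_first (p q y z S : R) : 0 < p -> 0 < q ->
  infinite_sum (fun j => y ^ j * (poch (p + q) j / poch (p + 1) j)
                         * kummerM (p + q + INR j) (p + 1 + INR j) z) S ->
  infinite_sum (fun j => y ^ j * (poch (p + q) j / poch (p + 1) j)
                         * kummerM (1 - q) (p + 1 + INR j) (- z)) (exp (- z) * S).
Proof.
  intros Hp Hq HS. apply (infinite_sum_scal _ _ (exp (- z))) in HS.
  eapply infinite_sum_ext; [|exact HS]. intros j. pose proof (pos_INR j).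
  replace (1 - q) with ((p + 1 + INR j) - (p + q + INR j)) by ring.
  rewrite kummer_transform by lra. ring.
Qed.

(* The successive derivatives of [M(p+q, p+1, .)]:
   [d^j/dz^j M(p+q,p+1,z) = (p+q)_j/(p+1)_j M(p+q+j, p+1+j, z)]. *)
Definition kummer_derivative (p q : R) (j : nat) (t : R) : R :=
  poch (p + q) j / poch (p + 1) j * kummerM (p + q + INR j) (p + 1 + INR j) t.

Lemma kummer_derivatives (p q : R) : 0 < p -> 0 < q ->
  deriv_seq (kummerM (p + q) (p + 1)) (kummer_derivative p q).
Proof.
  intros Hp Hq. split.
  - intros t. unfold kummer_derivative. simpl. rewrite !Rplus_0_r. field.
  - intros j t. apply is_derive_Reals. unfold kummer_derivative.
    pose proof (pos_INR j). pose proof (poch_pos (p + 1) j ltac:(lra)).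
    replace (poch (p + q) (S j) / poch (p + 1) (S j) * kummerM (p + q + INR (S j)) (p + 1 + INR (S j)) t)
      with (poch (p + q) j / poch (p + 1) j * ((p + q + INR j) / (p + 1 + INR j) *
              kummerM (p + q + INR j + 1) (p + 1 + INR j + 1) t)).
    + apply (is_derive_scal (kummerM _ _)), kummer_deriv. lra.
    + rewrite !poch_S, S_INR.
      replace (p + q + (INR j + 1)) with (p + q + INR j + 1) by ring.
      replace (p + 1 + (INR j + 1)) with (p + 1 + INR j + 1) by ring.
      field. split; lra.
Qed.

Lemma deriv_seq_unique (f : R -> R) (D D' : nat -> R -> R) :
  deriv_seq f D -> deriv_seq f D' -> forall j t, D j t = D' j t.
Proof.
  intros [H0 H1] [H0' H1'] j. induction j as [|j IH]; intros t; [now rewrite H0, H0'|].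
  assert (E : D j = D' j) by (apply functional_extensionality; auto).
  specialize (H1 j t). rewrite E in H1. eapply uniqueness_limite; eauto.
Qed.

Theorem mainTheorem9 (p q x y : R) :
  0 < p -> 0 < q -> 0 <= x -> 0 <= y < 1 ->
  let z := x * y / 2 in
  let K := rpow y p * rpow (1 - y) q / (p * Beta p q) in
  (* the defining series of B_{p,q}(x,y) converges *)
  (exists L, infinite_sum
     (fun j => / INR (fact j) * (x / 2) ^ j * Ibeta y (p + INR j) q) L) /\
  (* first expansion *)
  (exists S, infinite_sum
     (fun j => y ^ j * (poch (p + q) j / poch (p + 1) j)
               * kummerM (p + q + INR j) (p + 1 + INR j) z) S /\
   ncbeta p q x y = exp (- x / 2) * K * S) /\
  (* second expansion *)
  (exists S, infinite_sum
     (fun j => y ^ j * (poch (p + q) j / poch (p + 1) j)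
               * kummerM (1 - q) (p + 1 + INR j) (- z)) S /\
   ncbeta p q x y = exp (x * (y - 1) / 2) * K * S) /\
  (* derivative form *)
  (exists D, deriv_seq (kummerM (p + q) (p + 1)) D) /\
  (forall D, deriv_seq (kummerM (p + q) (p + 1)) D ->
   exists S, infinite_sum (fun j => y ^ j * D j z) S /\
   ncbeta p q x y = exp (- x / 2) * K * S).
Proof.
  intros Hp Hq Hx Hy z K.
  destruct (first_expansion p q x y Hp Hq Hx Hy) as [Hconv [S [HS Hnc]]].
  fold z K in HS, Hnc.
  split; [exact Hconv|]. split; [now exists S|]. split.
  { exists (exp (- z) * S). split; [now apply second_series_of_first|].
    rewrite Hnc. replace (exp (- x / 2)) with (exp (x * (y - 1) / 2) * exp (- z)).
    - ring.
    - rewrite <- exp_plus. f_equal. unfold z. field. }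
  split; [exists (kummer_derivative p q); now apply kummer_derivatives|].
  intros D HD. exists S. split; [|exact Hnc].
  eapply infinite_sum_ext; [|exact HS]. intros j.
  rewrite (deriv_seq_unique _ _ _ HD (kummer_derivatives p q Hp Hq)).
  unfold kummer_derivative. ring.
Qed.
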